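(* Let $0<q<1/2$, $p=1-q$, $\lambda=q/p<1$, and let $z\geq 1$ and $A\geq z$ be integers. The probability $P_A(z)$ that the $A$-Nakamoto double spend attack (described in the context) succeeds is $$P_A(z)=\frac{I_{4pq}(z,1/2)-\lambda^{A+1}}{1-\lambda^{A+1}},$$ where $I_x(a,b)=\frac{\Gamma(a+b)}{\Gamma(a)\Gamma(b)}\int_0^x t^{a-1}(1-t)^{b-1}\,dt$ is the regularized incomplete Beta function and $\Gamma$ is Euler's Gamma function.
   Context: Mining model: the attacker has relative hashrate $q$ and the honest miners relative hashrate $p=1-q$; blocks found by the honest miners and by the attacker form independent Poisson processes with rates $p/\tau_0$ and $q/\tau_0$ respectively ($\tau_0>0$ the mean interblock time); block propagation is instantaneous and difficulty is constant. The recipient of a transaction requires $z$ confirmations. The $A$-Nakamoto double spend strategy (with one pre-mined block) is: (1) the attacker mines on top of the last block of the official blockchain a block containing a transaction returning the payment funds to an address he controls; if the honest miners find a block first, he restarts mining on top of the new last official block; (2) once he has mined this one block (kept secret, with the honest miners not having found a block meanwhile), he sends the paying transaction to the vendor and keeps mining on his secret fork, while the honest miners extend the official chain; (3) the lag is (number of official blocks after the fork point) minus (number of blocks of the secret fork); if the lag reaches $A$ the attacker gives up and the attack fails; (4) if, at a moment when the official chain has added at least $z$ blocks (confirmations of the vendor transaction), the secret fork is strictly longer than the official chain (lag $\leq -1$), the attacker publishes it and the attack succeeds. The attack cycle ends at success or failure. *)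

From Stdlib Require Import Reals ZArith List Lra.
From Coquelicot Require Import Coquelicot.
Import ListNotations.
Open Scope R_scope.

Definition Gamma (s : R) : R :=
  RInt_gen (fun t => Rpower t (s - 1) * exp (- t)) (at_right 0) (Rbar_locally p_infty).

Definition inc_beta (x a b : R) : R :=
  Gamma (a + b) / (Gamma a * Gamma b) *
  RInt (fun t => Rpower t (a - 1) * Rpower (1 - t) (b - 1)) 0 x.

(** Discrete model of the attack after the pre-mined block (step (2) onwards).
    A block sequence is a list of booleans: [true] = block found by the honest
    miners, [false] = block found by the attacker. *)

Fixpoint block_seqs (n : nat) : list (list bool) :=
  match n with
  | O => (@nil bool) :: nil
  | S k => List.map (cons true) (block_seqs k) ++ List.map (cons false) (block_seqs k)
  end.

Definition seq_weight (p q : R) (l : list bool) : R :=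
  List.fold_right (fun (b : bool) (w : R) => (if b then p else q) * w) 1 l.

(** Outcome of the attack cycle along a block sequence, starting from [n] official
    blocks after the fork point and [m] blocks on the secret fork:
    [Some true] = success, [Some false] = failure (lag reached A),
    [None] = not yet decided. *)
Fixpoint attack_outcome (z A : nat) (n m : nat) (l : list bool) : option bool :=
  match l with
  | nil => None
  | b :: l' =>
      let n' := if b then S n else n in
      let m' := if b then m else S m in
      let lag := (Z.of_nat n' - Z.of_nat m')%Z in
      if Z.leb (Z.of_nat A) lag then Some false
      else if andb (Nat.leb z n') (Z.leb lag (-1)) then Some true
      else attack_outcome z A n' m' l'
  end.

(** Probability that the attack has succeeded within the first [k] blocks mined
    after the vendor transaction is sent (start: 0 official blocks after the fork,
    1 pre-mined secret block, i.e. lag = -1). *)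
Definition attack_success_by (p q : R) (z A : nat) (k : nat) : R :=
  List.fold_right Rplus 0
    (List.map (fun l => seq_weight p q l *
                   match attack_outcome z A 0 1 l with Some true => 1 | _ => 0 end)
         (block_seqs k)).

(* After the pre-mined block the race is a random walk of the lag, stopped
   when the attacker gives up or wins.  A bounded function of the state that
   is harmonic for this walk and takes the boundary values 0 and 1 equals the
   expected value of the stopped process, and the stopped process decides
   geometrically fast (any [z + A] consecutive honest blocks end the race), so
   the success probabilities within [k] blocks converge to its value at the
   start.  Such a function is obtained by rescaling the success probability of
   an attacker who never gives up by the gambler's-ruin value
   [(q/p) ^ (A + 1)].  At the start, the latter is a polynomial in [q] with
   derivative [K (q (1 - q)) ^ (z - 1)]; the substitution [t = 4 x (1 - x)]
   and [Gamma (n + 1) = n!], [Gamma (n + 1/2) = (2n)! / (4^n n!) Gamma (1/2)]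
   identify it with [I_(4pq) (z, 1/2)]. *)

From Stdlib Require Import Reals ZArith List Lra Lia.
From Stdlib Require Classical_Prop.
From Coquelicot Require Import Coquelicot.
Open Scope R_scope.

Lemma pow_unit_interval x n : 0 <= x <= 1 -> 0 <= x ^ n <= 1.
Proof.
  intros Hx; split; [apply pow_le; lra|].
  induction n as [|n IH]; simpl; [lra|].
  assert (0 <= x ^ n) by (apply pow_le; lra); nra.
Qed.

(** * Expectation over block sequences *)

Lemma fold_Rplus_app (l1 l2 : list R) :
  fold_right Rplus 0 (l1 ++ l2) = fold_right Rplus 0 l1 + fold_right Rplus 0 l2.
Proof. induction l1 as [|x l1 IH]; simpl; [|rewrite IH]; ring. Qed.

Lemma fold_Rplus_map_scal {X : Type} (c : R) (g : X -> R) (s : list X) :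
  fold_right Rplus 0 (map (fun x => c * g x) s) = c * fold_right Rplus 0 (map g s).
Proof. induction s as [|x s IH]; simpl; [|rewrite IH]; ring. Qed.

Section Expectation.

Variables p q : R.

Definition expect (k : nat) (F : list bool -> R) : R :=
  fold_right Rplus 0 (map (fun l => seq_weight p q l * F l) (block_seqs k)).

Lemma expect_O F : expect 0 F = F nil.
Proof. unfold expect; simpl; ring. Qed.

Lemma expect_S k F :
  expect (S k) F =
  p * expect k (fun l => F (true :: l)) + q * expect k (fun l => F (false :: l)).
Proof.
  unfold expect; simpl block_seqs.
  rewrite map_app, fold_Rplus_app, !map_map, <- !fold_Rplus_map_scal.
  f_equal; f_equal; apply map_ext; intros l; simpl; ring.
Qed.

Lemma expect_ext k F G : (forall l, F l = G l) -> expect k F = expect k G.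
Proof. intros FG; unfold expect; f_equal; apply map_ext; intros l; rewrite FG; reflexivity. Qed.

Lemma expect_lin k a b F G :
  expect k (fun l => a * F l + b * G l) = a * expect k F + b * expect k G.
Proof.
  revert F G; induction k as [|k IH]; intros F G.
  - rewrite !expect_O; reflexivity.
  - rewrite !expect_S, (IH (fun l => F (true :: l))), (IH (fun l => F (false :: l))); ring.
Qed.

Lemma expect_scal k c F : expect k (fun l => c * F l) = c * expect k F.
Proof.
  rewrite <- (Rplus_0_r (c * expect k F)), <- (Rmult_0_l (expect k F)), <- expect_lin.
  apply expect_ext; intros l; ring.
Qed.

Lemma expect_sub k F G : expect k (fun l => F l - G l) = expect k F - expect k G.
Proof.
  replace (expect k F - expect k G) with (1 * expect k F + -1 * expect k G) by ring.
  rewrite <- expect_lin; apply expect_ext; intros l; ring.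
Qed.

Lemma expect_const k c : p + q = 1 -> expect k (fun _ => c) = c.
Proof.
  intros Hpq; induction k as [|k IH].
  - apply expect_O.
  - rewrite expect_S, IH; nra.
Qed.

Hypotheses (Hp : 0 <= p) (Hq : 0 <= q).

Lemma expect_nonneg k F : (forall l, 0 <= F l) -> 0 <= expect k F.
Proof.
  revert F; induction k as [|k IH]; intros F F_ge0.
  - rewrite expect_O; apply F_ge0.
  - rewrite expect_S.
    assert (0 <= expect k (fun l => F (true :: l))) by (apply IH; auto).
    assert (0 <= expect k (fun l => F (false :: l))) by (apply IH; auto).
    nra.
Qed.

Lemma expect_le k F G : (forall l, F l <= G l) -> expect k F <= expect k G.
Proof.
  intros FG.
  assert (H : 0 <= expect k (fun l => G l - F l))
    by (apply expect_nonneg; intros l; specialize (FG l); lra).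
  rewrite expect_sub in H; lra.
Qed.

Lemma expect_ge_all_honest k F :
  (forall l, 0 <= F l) -> p ^ k * F (repeat true k) <= expect k F.
Proof.
  revert F; induction k as [|k IH]; intros F F_ge0.
  - rewrite expect_O; simpl; lra.
  - rewrite expect_S; simpl.
    assert (H1 := IH (fun l => F (true :: l)) (fun l => F_ge0 _)).
    assert (0 <= expect k (fun l => F (false :: l))) by (apply expect_nonneg; auto).
    simpl in H1; nra.
Qed.

Lemma expect_abs_le k F G :
  (forall l, Rabs (F l) <= G l) -> Rabs (expect k F) <= expect k G.
Proof.
  intros FG; apply Rabs_le; split.
  - replace (- expect k G) with (-1 * expect k G) by ring; rewrite <- expect_scal.
    apply expect_le; intros l; specialize (FG l); apply Rabs_le_between in FG; lra.
  - apply expect_le; intros l; specialize (FG l); apply Rabs_le_between in FG; lra.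
Qed.

End Expectation.

(** * The race as a stopped random walk *)

Section Attack.

Variables z A : nat.

Definition lag (n m : nat) : Z := (Z.of_nat n - Z.of_nat m)%Z.

Definition decision (n m : nat) : option bool :=
  if Z.leb (Z.of_nat A) (lag n m) then Some false
  else if andb (Nat.leb z n) (Z.leb (lag n m) (-1)) then Some true
  else None.

Lemma attack_outcome_cons n m b l :
  attack_outcome z A n m (b :: l) =
  match decision (if b then S n else n) (if b then m else S m) with
  | Some r => Some r
  | None => attack_outcome z A (if b then S n else n) (if b then m else S m) l
  end.
Proof.
  unfold decision, lag; destruct b; cbn -[Z.of_nat];
    (destruct Z.leb; [reflexivity|]); destruct andb; reflexivity.
Qed.

Lemma attack_outcome_app n m l1 l2 r :
  attack_outcome z A n m l1 = Some r -> attack_outcome z A n m (l1 ++ l2) = Some r.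
Proof.
  revert n m; induction l1 as [|b l1 IH]; intros n m H; [discriminate|].
  simpl app; rewrite attack_outcome_cons in *.
  destruct decision; auto.
Qed.

Lemma all_honest_last_undecided n m k : (1 <= k)%nat ->
  attack_outcome z A n m (repeat true k) = None -> decision (n + k) m = None.
Proof.
  intros Hk; destruct k as [|k]; [lia|]; clear Hk.
  revert n; induction k as [|k IH]; intros n H;
    simpl repeat in H; rewrite attack_outcome_cons in H;
    destruct (decision (S n) m) eqn:D; try discriminate.
  - rewrite Nat.add_1_r; exact D.
  - rewrite <- Nat.add_succ_comm; exact (IH _ H).
Qed.

(* From lag [L], [z + A] honest blocks either push the lag to [A], or, if
   [L < -z], already after [z] blocks give [z] confirmations with lag [<= -1]. *)
Lemma all_honest_decides n m : (1 <= z)%nat ->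
  attack_outcome z A n m (repeat true (z + A)) <> None.
Proof.
  intros Hz Hlong.
  assert (Hshort : attack_outcome z A n m (repeat true z) = None).
  { destruct (attack_outcome z A n m (repeat true z)) eqn:E; auto.
    rewrite repeat_app, (attack_outcome_app _ _ _ _ _ E) in Hlong; discriminate. }
  apply all_honest_last_undecided in Hlong, Hshort; try lia.
  unfold decision, lag in Hlong, Hshort.
  destruct (Z.leb_spec (Z.of_nat A) (Z.of_nat (n + (z + A)) - Z.of_nat m)); [discriminate|].
  destruct (Z.leb_spec (Z.of_nat A) (Z.of_nat (n + z) - Z.of_nat m)); [discriminate|].
  destruct (Nat.leb_spec z (n + z)); [|lia].
  destruct (Z.leb_spec (Z.of_nat (n + z) - Z.of_nat m) (-1)); [discriminate|lia].
Qed.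

Definition absorbed (V : nat -> nat -> R) (n m : nat) : R :=
  match decision n m with Some true => 1 | Some false => 0 | None => V n m end.

Fixpoint value_along (V : nat -> nat -> R) (n m : nat) (l : list bool) : R :=
  match l with
  | nil => V n m
  | b :: l' =>
      let n' := if b then S n else n in
      let m' := if b then m else S m in
      match decision n' m' with
      | Some true => 1 | Some false => 0 | None => value_along V n' m' l'
      end
  end.

Definition success_indicator (n m : nat) (l : list bool) : R :=
  match attack_outcome z A n m l with Some true => 1 | _ => 0 end.

Definition pending_indicator (n m : nat) (l : list bool) : R :=
  match attack_outcome z A n m l with None => 1 | Some _ => 0 end.

Lemma value_along_gap V M n m l : (forall n m, Rabs (V n m) <= M) ->
  Rabs (success_indicator n m l - value_along V n m l) <= M * pending_indicator n m l.
Proof.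
  intros HV; revert n m; induction l as [|b l IH]; intros n m.
  - unfold success_indicator, pending_indicator; simpl.
    rewrite Rminus_0_l, Rabs_Ropp, Rmult_1_r; apply HV.
  - unfold success_indicator, pending_indicator in *; rewrite attack_outcome_cons.
    simpl value_along; destruct decision as [[|]|]; [| |apply IH];
      rewrite Rmult_0_r, Rminus_diag, Rabs_R0; lra.
Qed.

Section Absorption.

Variables p q : R.

Definition harmonic (V : nat -> nat -> R) : Prop :=
  forall n m, decision n m = None ->
  V n m = p * absorbed V (S n) m + q * absorbed V n (S m).

Hypotheses (Hpq : p + q = 1) (Hp : 0 < p) (Hq : 0 <= q).

Lemma value_expect V k n m : harmonic V ->
  decision n m = None -> V n m = expect p q k (value_along V n m).
Proof.
  intros V_harmonic; revert n m; induction k as [|k IH]; intros n m Hnm.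
  - rewrite expect_O; reflexivity.
  - rewrite expect_S, V_harmonic by exact Hnm; simpl value_along.
    unfold absorbed; f_equal; f_equal;
      [destruct (decision (S n) m) as [[|]|] eqn:D | destruct (decision n (S m)) as [[|]|] eqn:D];
      solve [symmetry; apply expect_const; auto | auto].
Qed.

Definition pending (k n m : nat) : R := expect p q k (pending_indicator n m).

Lemma pending_bounds k n m : 0 <= pending k n m <= 1.
Proof.
  unfold pending; split.
  - apply expect_nonneg; try lra; intros l; unfold pending_indicator; destruct attack_outcome; lra.
  - rewrite <- (expect_const p q k 1 Hpq); apply expect_le; try lra.
    intros l; unfold pending_indicator; destruct attack_outcome; lra.
Qed.

Lemma pending_S k n m :
  pending (S k) n m =
  p * (match decision (S n) m with None => pending k (S n) m | Some _ => 0 end) +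
  q * (match decision n (S m) with None => pending k n (S m) | Some _ => 0 end).
Proof.
  unfold pending, pending_indicator; rewrite expect_S.
  f_equal; f_equal; destruct decision eqn:D;
    try (transitivity (expect p q k (fun _ => 0)); [|apply expect_const, Hpq]);
    apply expect_ext; intros l; rewrite attack_outcome_cons, D; reflexivity.
Qed.

(* Markov property: what is still pending after [k] blocks restarts afresh. *)
Lemma pending_add t s k n m : (forall n m, pending t n m <= s) ->
  pending (k + t) n m <= s * pending k n m.
Proof.
  intros Ht; revert n m; induction k as [|k IH]; intros n m.
  - unfold pending at 2, pending_indicator; rewrite expect_O; simpl.
    rewrite Rmult_1_r; apply Ht.
  - simpl (S k + t)%nat; rewrite !pending_S.
    destruct (decision (S n) m); destruct (decision n (S m));
      try pose proof (IH (S n) m); try pose proof (IH n (S m)); nra.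
Qed.

Lemma pending_horizon n m : (1 <= z)%nat ->
  pending (z + A) n m <= 1 - p ^ (z + A).
Proof.
  intros Hz.
  set (decided := fun l => match attack_outcome z A n m l with None => 0 | Some _ => 1 end).
  assert (E : pending (z + A) n m = 1 - expect p q (z + A) decided).
  { rewrite <- (expect_const p q (z + A) 1 Hpq) at 1; rewrite <- expect_sub.
    apply expect_ext; intros l; unfold pending_indicator, decided.
    destruct attack_outcome; ring. }
  assert (Hdec : decided (repeat true (z + A)) = 1).
  { unfold decided; destruct attack_outcome eqn:O; auto.
    exfalso; exact (all_honest_decides n m Hz O). }
  assert (H := expect_ge_all_honest p q ltac:(lra) Hq (z + A) decided).
  rewrite Hdec, Rmult_1_r in H.
  rewrite E; apply Rplus_le_compat_l, Ropp_le_contravar, H.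
  intros l; unfold decided; destruct attack_outcome; lra.
Qed.

Lemma pending_vanishes n m : (1 <= z)%nat -> is_lim_seq (fun k => pending k n m) 0.
Proof.
  intros Hz.
  set (T := (z + A)%nat); set (b := 1 - p ^ T).
  assert (Hb : 0 <= b < 1).
  { assert (0 < p ^ T) by (apply pow_lt; lra).
    assert (p ^ T <= 1) by (apply pow_unit_interval; lra). unfold b; lra. }
  assert (Hblocks : forall j n m, pending (j * T) n m <= b ^ j).
  { induction j as [|j IH]; intros n' m'.
    - apply pending_bounds.
    - change (S j * T)%nat with (T + j * T)%nat; change (b ^ S j) with (b * b ^ j).
      rewrite Rmult_comm; eapply Rle_trans; [apply pending_add, IH|].
      apply Rmult_le_compat_l; [apply pow_le; lra|apply pending_horizon; auto]. }
  apply is_lim_seq_spec; intros eps.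
  destruct (pow_lt_1_zero b ltac:(rewrite Rabs_pos_eq; lra) eps (cond_pos eps)) as [N HN].
  exists (N * T)%nat; intros k Hk.
  rewrite Rminus_0_r, Rabs_pos_eq by apply pending_bounds.
  replace k with ((k - N * T) + N * T)%nat by lia.
  eapply Rle_lt_trans; [apply pending_add, Hblocks|].
  specialize (HN N (le_n N)); rewrite Rabs_pos_eq in HN by (apply pow_le; lra).
  pose proof (pending_bounds (k - N * T) n m).
  assert (0 <= b ^ N) by (apply pow_le; lra); nra.
Qed.

Theorem success_limit V M n m :
  harmonic V -> (forall n m, Rabs (V n m) <= M) ->
  (1 <= z)%nat -> decision n m = None ->
  is_lim_seq (fun k => expect p q k (success_indicator n m)) (V n m).
Proof.
  intros V_harmonic V_bound Hz Hnm.
  assert (Hgap : forall k, Rabs (expect p q k (success_indicator n m) - V n m)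
                           <= M * pending k n m).
  { intros k; rewrite (value_expect V k n m V_harmonic Hnm), <- expect_sub.
    unfold pending; rewrite <- expect_scal.
    apply expect_abs_le; try lra; intros l; apply value_along_gap, V_bound. }
  assert (Hlim : forall s, is_lim_seq (fun k => V n m + s * (M * pending k n m)) (V n m)).
  { intros s.
    assert (H0 := is_lim_seq_scal_l _ (s * M) _ (pending_vanishes n m Hz)).
    simpl in H0; rewrite Rmult_0_r in H0.
    assert (H := is_lim_seq_plus' _ _ (V n m) 0 (is_lim_seq_const _) H0).
    rewrite Rplus_0_r in H; eapply is_lim_seq_ext; [|exact H].
    intros k; simpl; ring. }
  refine (is_lim_seq_le_le _ _ _ _ _ (Hlim (-1)) (Hlim 1)); intros k.
  specialize (Hgap k); apply Rabs_le_between in Hgap; lra.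
Qed.

End Absorption.

End Attack.

(** * The value of the attack *)

Section Value.

Variables p q : R.

Local Notation lambda := (q / p).

(* [loss j D]: probability that an attacker who never gives up fails, when the
   honest miners still need [j] blocks to reach [z] confirmations and the
   attacker needs [D] more blocks to get ahead of that height.  For [j = 0]
   this is gambler's ruin, lost with probability [1 - lambda ^ D]. *)
Fixpoint loss (j : nat) : nat -> R :=
  match j with
  | O => fun D => 1 - lambda ^ D
  | S j' => fix loss_S (D : nat) : R :=
      match D with O => 0 | S D' => p * loss j' (S D') + q * loss_S D' end
  end.

Definition unbounded_success (z n m : nat) : R :=
  1 - loss (z - n) (S (Nat.max n z) - m).

(* [unbounded_success] is harmonic and equals [lambda ^ (A + 1)] when the lag
   reaches [A]; rescaling it gives boundary values [0] on give-up and [1] on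
   success. *)
Definition attack_value (z A n m : nat) : R :=
  (unbounded_success z n m - lambda ^ (A + 1)) / (1 - lambda ^ (A + 1)).

Lemma loss_O_r j : loss j 0 = 0.
Proof. destruct j; simpl; ring. Qed.

Lemma loss_rec j D : loss (S j) D = p * loss j D + q * loss (S j) (D - 1).
Proof.
  destruct D as [|D]; simpl Nat.sub.
  - rewrite !loss_O_r; ring.
  - rewrite Nat.sub_0_r; reflexivity.
Qed.

Hypotheses (Hpq : p + q = 1) (Hp : 0 < p) (Hq : 0 <= q) (Hqp : q < p).

Lemma loss_O_harmonic D : loss 0 (S D) = p * loss 0 (S (S D)) + q * loss 0 D.
Proof. simpl; replace q with (1 - p) by lra; field; lra. Qed.

Lemma unbounded_success_harmonic z n m : ~ (z <= n < m)%nat ->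
  unbounded_success z n m =
  p * unbounded_success z (S n) m + q * unbounded_success z n (S m).
Proof.
  intros Hnot; unfold unbounded_success.
  destruct (Nat.lt_ge_cases n z) as [Hnz|Hzn].
  - replace (z - n)%nat with (S (z - S n)) by lia.
    rewrite !Nat.max_r by lia.
    replace (S z - S m)%nat with ((S z - m) - 1)%nat by lia.
    rewrite loss_rec; lra.
  - rewrite !(proj2 (Nat.sub_0_le z _)) by lia.
    rewrite !Nat.max_l by lia.
    replace (S n - m)%nat with (S (n - m)) by lia.
    replace (S (S n) - m)%nat with (S (S (n - m))) by lia.
    replace (S n - S m)%nat with (n - m)%nat by lia.
    rewrite loss_O_harmonic; lra.
Qed.

Lemma lambda_bounds : 0 <= lambda < 1.
Proof.
  split; [apply Rdiv_le_0_compat; lra|].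
  apply (Rmult_lt_reg_r p); [exact Hp|]; unfold Rdiv; rewrite Rmult_assoc, Rinv_l; lra.
Qed.

Lemma lambda_pow_lt_1 k : lambda ^ (k + 1) < 1.
Proof. apply pow_lt_1_compat; [apply lambda_bounds|lia]. Qed.

Lemma attack_value_success z A n m :
  (z <= n < m)%nat -> attack_value z A n m = 1.
Proof.
  intros Hnm; unfold attack_value, unbounded_success.
  rewrite (proj2 (Nat.sub_0_le z n)), Nat.max_l, (proj2 (Nat.sub_0_le (S n) m)) by lia.
  pose proof (lambda_pow_lt_1 A); rewrite loss_O_r; field; lra.
Qed.

Lemma attack_value_giveup z A n m :
  (z <= A)%nat -> lag n m = Z.of_nat A -> attack_value z A n m = 0.
Proof.
  unfold lag; intros HzA Hlag; unfold attack_value, unbounded_success.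
  rewrite (proj2 (Nat.sub_0_le z n)), Nat.max_l by lia.
  replace (S n - m)%nat with (A + 1)%nat by lia.
  pose proof (lambda_pow_lt_1 A); simpl loss; field; lra.
Qed.

Lemma absorbed_attack_value z A n m : (z <= A)%nat -> (lag n m <= Z.of_nat A)%Z ->
  absorbed z A (attack_value z A) n m = attack_value z A n m.
Proof.
  intros HzA Hlag; unfold absorbed, decision.
  destruct (Z.leb_spec (Z.of_nat A) (lag n m)).
  - symmetry; apply attack_value_giveup; lia.
  - destruct (Nat.leb_spec z n), (Z.leb_spec (lag n m) (-1)); simpl; try reflexivity.
    symmetry; apply attack_value_success; unfold lag in *; lia.
Qed.

Lemma attack_value_harmonic z A : (z <= A)%nat -> harmonic z A p q (attack_value z A).
Proof.
  intros HzA n m; unfold decision.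
  destruct (Z.leb_spec (Z.of_nat A) (lag n m)) as [|Hlag]; [discriminate|].
  intros Hund; rewrite !absorbed_attack_value by (unfold lag in *; lia).
  assert (Hnot : ~ (z <= n < m)%nat).
  { intros Hnm; revert Hund; destruct (Nat.leb_spec z n), (Z.leb_spec (lag n m) (-1));
      simpl; try discriminate; unfold lag in *; lia. }
  unfold attack_value; rewrite unbounded_success_harmonic by exact Hnot.
  pose proof (lambda_pow_lt_1 A); set (c := lambda ^ (A + 1)) in *.
  replace q with (1 - p) by lra; field; lra.
Qed.

Lemma loss_unit_interval j D : 0 <= loss j D <= 1.
Proof.
  revert D; induction j as [|j IHj]; intros D.
  - pose proof (pow_unit_interval lambda D ltac:(pose proof lambda_bounds; lra)).
    simpl; lra.
  - induction D as [|D IHD]; [simpl; lra|].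
    change (loss (S j) (S D)) with (p * loss j (S D) + q * loss (S j) D).
    pose proof (IHj (S D)); nra.
Qed.

Lemma attack_value_bound z A n m :
  Rabs (attack_value z A n m) <= 1 / (1 - lambda ^ (A + 1)).
Proof.
  pose proof (loss_unit_interval (z - n) (S (Nat.max n z) - m)).
  pose proof (lambda_pow_lt_1 A).
  pose proof (pow_unit_interval lambda (A + 1) ltac:(pose proof lambda_bounds; lra)).
  unfold attack_value, unbounded_success.
  unfold Rdiv; rewrite Rabs_mult, Rabs_inv, (Rabs_pos_eq (1 - _)) by lra.
  apply Rmult_le_compat_r; [apply Rlt_le, Rinv_0_lt_compat; lra|].
  apply Rabs_le; lra.
Qed.

Lemma attack_value_start z A :
  attack_value z A 0 1 = (1 - loss z z - lambda ^ (A + 1)) / (1 - lambda ^ (A + 1)).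
Proof.
  unfold attack_value, unbounded_success.
  rewrite Nat.sub_0_r; replace (S (Nat.max 0 z) - 1)%nat with z by lia; reflexivity.
Qed.

End Value.

Theorem attack_success_limit q z A :
  0 <= q -> q < 1 / 2 -> (1 <= z)%nat -> (z <= A)%nat ->
  is_lim_seq (fun k => attack_success_by (1 - q) q z A k) (attack_value (1 - q) q z A 0 1).
Proof.
  intros Hq0 Hq Hz HzA.
  eapply (success_limit z A (1 - q) q); try lra.
  - apply attack_value_harmonic; auto; lra.
  - intros n m; apply attack_value_bound; lra.
  - exact Hz.
  - unfold decision, lag; destruct (Z.leb_spec (Z.of_nat A) (Z.of_nat 0 - Z.of_nat 1)); [lia|].
    destruct (Nat.leb_spec z 0); [lia|reflexivity].
Qed.

(** * The loss probability as a polynomial *)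

Fixpoint sum_lt (N : nat) (f : nat -> R) : R :=
  match N with O => 0 | S N' => sum_lt N' f + f N' end.

Lemma sum_lt_ext N f g : (forall k, (k < N)%nat -> f k = g k) -> sum_lt N f = sum_lt N g.
Proof. induction N as [|N IH]; intros fg; simpl; [|rewrite IH, fg]; auto. Qed.

Lemma sum_lt_plus N f g : sum_lt N (fun k => f k + g k) = sum_lt N f + sum_lt N g.
Proof. induction N as [|N IH]; simpl; [|rewrite IH]; ring. Qed.

Lemma sum_lt_sub N f g : sum_lt N (fun k => f k - g k) = sum_lt N f - sum_lt N g.
Proof. induction N as [|N IH]; simpl; [|rewrite IH]; ring. Qed.

Lemma sum_lt_scal N c f : sum_lt N (fun k => c * f k) = c * sum_lt N f.
Proof. induction N as [|N IH]; simpl; [|rewrite IH]; ring. Qed.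

Lemma sum_lt_succ_l N f : sum_lt (S N) f = f 0%nat + sum_lt N (fun k => f (S k)).
Proof. induction N as [|N IH]; simpl in *; [|rewrite IH]; ring. Qed.

Lemma binomial_0_r n : Binomial.C n 0 = 1.
Proof.
  unfold Binomial.C; rewrite Nat.sub_0_r; simpl.
  pose proof (INR_fact_lt_0 n); field; lra.
Qed.

Lemma binomial_diag n : Binomial.C n n = 1.
Proof.
  unfold Binomial.C; rewrite Nat.sub_diag; simpl.
  pose proof (INR_fact_lt_0 n); field; lra.
Qed.

Lemma binomial_pascal j k :
  Binomial.C (S j + S k) (S k) = Binomial.C (j + S k) (S k) + Binomial.C (S j + k) k.
Proof.
  replace (S j + S k)%nat with (S (S (j + k))) by lia.
  replace (j + S k)%nat with (S (j + k)) by lia.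
  replace (S j + k)%nat with (S (j + k)) by lia.
  rewrite <- pascal by lia; ring.
Qed.

Lemma binomial_absorb j N :
  INR (S N) * Binomial.C (j + S N) (S N) = INR (S j) * Binomial.C (S j + N) N.
Proof.
  unfold Binomial.C.
  replace (j + S N - S N)%nat with j by lia.
  replace (S j + N - N)%nat with (S j) by lia.
  replace (S j + N)%nat with (j + S N)%nat by lia.
  rewrite !fact_simpl, !mult_INR.
  pose proof (INR_fact_lt_0 j); pose proof (INR_fact_lt_0 N).
  pose proof (lt_0_INR (S j) ltac:(lia)); pose proof (lt_0_INR (S N) ltac:(lia)).
  field; lra.
Qed.

(* Summing over the number [k] of attacker blocks found before the honest
   miners' last needed block. *)
Lemma loss_closed_form p q j D :
  loss p q (S j) D =
  sum_lt D (fun k => Binomial.C (j + k) k * p ^ S j * q ^ k * (1 - (q / p) ^ (D - k))).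
Proof.
  revert D; induction j as [|j IHj]; induction D as [|D IHD]; try reflexivity.
  - change (loss p q 1 (S D)) with (p * loss p q 0 (S D) + q * loss p q 1 D).
    rewrite IHD, sum_lt_succ_l, binomial_0_r, Nat.sub_0_r, <- sum_lt_scal.
    f_equal; [simpl; ring|].
    apply sum_lt_ext; intros k Hk.
    rewrite !Nat.add_0_l, !binomial_diag; simpl Nat.sub; simpl; ring.
  - change (loss p q (S (S j)) (S D))
      with (p * loss p q (S j) (S D) + q * loss p q (S (S j)) D).
    rewrite IHD, IHj, !sum_lt_succ_l, !binomial_0_r, <- !sum_lt_scal, Rmult_plus_distr_l,
      <- sum_lt_scal, !Nat.sub_0_r, Rplus_assoc, <- sum_lt_plus.
    f_equal; [simpl; ring|].
    apply sum_lt_ext; intros k Hk.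
    rewrite binomial_pascal; simpl Nat.sub; simpl; ring.
Qed.

(* The probability of fewer than [N] failures before the [j + 1]-th success,
   failures having probability [x]. *)
Definition negbin_cdf (j N : nat) (x : R) : R :=
  sum_lt N (fun k => Binomial.C (j + k) k * (1 - x) ^ S j * x ^ k).

Lemma loss_diag q j : 0 < q < 1 ->
  loss (1 - q) q (S j) (S j) = negbin_cdf j (S j) q - negbin_cdf j (S j) (1 - q).
Proof.
  intros Hq; rewrite loss_closed_form; unfold negbin_cdf; rewrite <- sum_lt_sub.
  apply sum_lt_ext; intros k Hk.
  replace (1 - (1 - q)) with q by ring.
  assert (E : S j = (k + (S j - k))%nat) by lia.
  set (e := (S j - k)%nat) in *; rewrite E, !pow_add; unfold Rdiv; rewrite Rpow_mult_distr, pow_inv.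
  field; apply pow_nonzero; lra.
Qed.

Lemma negbin_cdf_derive j N (x : R) :
  is_derive (negbin_cdf j (S N)) x
    (- INR (S j) * Binomial.C (S j + N) N * (1 - x) ^ j * x ^ N).
Proof.
  induction N as [|N IH].
  - apply (is_derive_ext (fun x => Binomial.C (j + 0) 0 * (1 - x) ^ S j));
      [intros t; unfold negbin_cdf; simpl; ring|].
    rewrite !binomial_0_r; auto_derive; auto.
    change (match j with 0%nat => 1 | S _ => INR j + 1 end) with (INR (S j)).
    replace (1 + - x) with (1 - x) by ring; simpl; ring.
  - apply (is_derive_ext
      (fun x => negbin_cdf j (S N) x + Binomial.C (j + S N) (S N) * (1 - x) ^ S j * x ^ S N));
      [reflexivity|].
    assert (Hterm : is_derive
      (fun x => Binomial.C (j + S N) (S N) * (1 - x) ^ S j * x ^ S N) x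
      (Binomial.C (j + S N) (S N) *
        (- INR (S j) * (1 - x) ^ j * x ^ S N + (1 - x) ^ S j * (INR (S N) * x ^ N)))).
    { auto_derive; auto.
      change (match j with 0%nat => 1 | S _ => INR j + 1 end) with (INR (S j)).
      change (match N with 0%nat => 1 | S _ => INR N + 1 end) with (INR (S N)).
      replace (1 + - x) with (1 - x) by ring; simpl; ring. }
    assert (H := is_derive_plus _ _ x _ _ IH Hterm).
    assert (Habs : Binomial.C (j + S N) (S N) =
                   INR (S j) * Binomial.C (S j + N) N / INR (S N)).
    { rewrite <- binomial_absorb; field; apply not_0_INR; lia. }
    rewrite binomial_pascal.
    replace (- INR (S j) * (Binomial.C (j + S N) (S N) + Binomial.C (S j + N) N) *
               (1 - x) ^ j * x ^ S N)
      with (- INR (S j) * Binomial.C (S j + N) N * (1 - x) ^ j * x ^ N +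
            Binomial.C (j + S N) (S N) *
              (- INR (S j) * (1 - x) ^ j * x ^ S N + (1 - x) ^ S j * (INR (S N) * x ^ N)));
      [exact H|].
    rewrite Habs; simpl pow; field; apply not_0_INR; lia.
Qed.

Lemma negbin_cdf_at_0 j N : negbin_cdf j (S N) 0 = 1.
Proof.
  unfold negbin_cdf; rewrite sum_lt_succ_l, binomial_0_r.
  rewrite (sum_lt_ext N _ (fun k => 0 * Binomial.C (j + S k) (S k)))
    by (intros k _; simpl; ring).
  rewrite sum_lt_scal; simpl; rewrite Rminus_0_r, pow1; ring.
Qed.

Lemma negbin_cdf_at_1 j N : negbin_cdf j N 1 = 0.
Proof.
  unfold negbin_cdf; rewrite (sum_lt_ext N _ (fun k => 0 * Binomial.C (j + k) k))
    by (intros k _; rewrite Rminus_diag, pow1; simpl; ring).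
  rewrite sum_lt_scal; ring.
Qed.

(* [(2j + 2)! / (j! (j + 1)!) = 2 / B(j + 1, j + 1)] *)
Definition half_beta_norm (j : nat) : R := 2 * INR (S j) * Binomial.C (S j + j) j.

(* [1 - loss (1 - x) x (j + 1) (j + 1)], by [one_sub_loss_diag]. *)
Definition initial_success_poly (j : nat) (x : R) : R :=
  1 - negbin_cdf j (S j) x + negbin_cdf j (S j) (1 - x).

Lemma initial_success_poly_0 j : initial_success_poly j 0 = 0.
Proof. unfold initial_success_poly; rewrite Rminus_0_r, negbin_cdf_at_0, negbin_cdf_at_1; ring. Qed.

Lemma initial_success_poly_derive j (x : R) :
  is_derive (initial_success_poly j) x (half_beta_norm j * (x * (1 - x)) ^ j).
Proof.
  assert (Hrefl : is_derive (fun x => negbin_cdf j (S j) (1 - x)) x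
     (- 1 * (- INR (S j) * Binomial.C (S j + j) j * (1 - (1 - x)) ^ j * (1 - x) ^ j))).
  { apply (is_derive_comp (negbin_cdf j (S j)) (fun x => 1 - x)).
    - apply negbin_cdf_derive.
    - auto_derive; auto; ring. }
  assert (H := is_derive_plus _ _ x _ _
    (is_derive_minus _ _ x _ _ (is_derive_const 1 x) (negbin_cdf_derive j j x)) Hrefl).
  replace (half_beta_norm j * (x * (1 - x)) ^ j)
    with (0 - - INR (S j) * Binomial.C (S j + j) j * (1 - x) ^ j * x ^ j +
          - 1 * (- INR (S j) * Binomial.C (S j + j) j * (1 - (1 - x)) ^ j * (1 - x) ^ j));
    [exact H|].
  unfold half_beta_norm; replace (1 - (1 - x)) with x by ring.
  rewrite Rpow_mult_distr; ring.
Qed.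

Lemma initial_success_poly_integral j (x : R) :
  is_RInt (fun t => half_beta_norm j * (t * (1 - t)) ^ j) 0 x (initial_success_poly j x).
Proof.
  replace (initial_success_poly j x) with (minus (initial_success_poly j x) (initial_success_poly j 0))
    by (rewrite initial_success_poly_0; unfold minus, plus, opp; simpl; ring).
  apply (is_RInt_derive (initial_success_poly j)).
  - intros t _; apply initial_success_poly_derive.
  - intros t _; apply (@ex_derive_continuous R_AbsRing R_NormedModule); auto_derive; auto.
Qed.

Lemma one_sub_loss_diag q j : 0 < q < 1 ->
  1 - loss (1 - q) q (S j) (S j) = initial_success_poly j q.
Proof. intros Hq; rewrite loss_diag by exact Hq; unfold initial_success_poly; ring. Qed.

(** * The Gamma function *)

Definition gamma_integrand (s t : R) : R := Rpower t (s - 1) * exp (- t).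

Notation is_improper_0_infty f l :=
  (is_RInt_gen f (at_right 0) (Rbar_locally p_infty) l).

Lemma at_right_0_intro (P : R -> Prop) (d : posreal) :
  (forall t, 0 < t < d -> P t) -> at_right 0 P.
Proof.
  intros HP; exists d; intros t Ht Hpos; apply HP; split; [exact Hpos|].
  change (Rabs (t - 0) < d) in Ht; rewrite Rminus_0_r, Rabs_pos_eq in Ht; lra.
Qed.

Lemma filter_prod_pos (P : R * R -> Prop) :
  (forall a b, 0 < a -> 0 < b -> P (a, b)) ->
  filter_prod (at_right 0) (Rbar_locally p_infty) P.
Proof.
  intros HP; apply Filter_prod with (fun a => 0 < a) (fun b => 0 < b).
  - apply (at_right_0_intro _ (mkposreal 1 Rlt_0_1)); intros t Ht; lra.
  - exists 0; auto.
  - intros a b Ha Hb; apply HP; auto.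
Qed.

Lemma between_pos a b x : 0 < a -> 0 < b -> Rmin a b <= x <= Rmax a b -> 0 < x.
Proof. intros Ha Hb Hx; assert (0 < Rmin a b) by (apply Rmin_case; auto); lra. Qed.

Lemma ex_RInt_pos (f : R -> R) a b :
  0 < a -> 0 < b -> (forall t, 0 < t -> continuous f t) -> ex_RInt f a b.
Proof.
  intros Ha Hb Hf; apply (@ex_RInt_continuous R_CompleteNormedModule).
  intros t Ht; apply Hf, (between_pos a b t); auto.
Qed.

Lemma is_RInt_gen_antiderivative (F f : R -> R) (L0 L1 : R) :
  (forall t, 0 < t -> is_derive F t (f t)) -> (forall t, 0 < t -> continuous f t) ->
  filterlim F (at_right 0) (locally L0) -> filterlim F (Rbar_locally p_infty) (locally L1) ->
  is_improper_0_infty f (L1 - L0).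
Proof.
  intros HF Hf H0 H1.
  apply (is_RInt_gen_ext (Derive F)).
  - apply filter_prod_pos; intros a b Ha Hb t Ht; simpl in Ht.
    apply is_derive_unique, HF, (between_pos a b t); auto; lra.
  - apply is_RInt_gen_Derive; auto; apply filter_prod_pos; intros a b Ha Hb t Ht;
      simpl in Ht; assert (Ht0 : 0 < t) by (apply (between_pos a b t); auto).
    + eexists; apply HF, Ht0.
    + apply (continuous_ext_loc _ f); [|apply Hf, Ht0].
      exists (mkposreal t Ht0); intros y Hy.
      change (Rabs (y - t) < t) in Hy; apply Rabs_lt_between in Hy.
      symmetry; apply is_derive_unique, HF; lra.
Qed.

Lemma exp_neg_le_fact_div_pow (t : R) (n : nat) :
  0 < t -> exp (- t) <= INR (fact n) / t ^ n.
Proof.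
  intros Ht; pose proof (exp_ge_taylor t n ltac:(lra)) as H.
  assert (Hsum : 0 <= sum_f_R0 (fun k => t ^ k / INR (fact k)) (pred n)).
  { apply cond_pos_sum; intros k; apply Rdiv_le_0_compat; [apply pow_le; lra|apply INR_fact_lt_0]. }
  assert (Htn : 0 < t ^ n) by (apply pow_lt; lra).
  pose proof (INR_fact_lt_0 n).
  rewrite exp_Ropp; apply (Rmult_le_reg_r (exp t)); [apply exp_pos|].
  rewrite Rinv_l by (apply Rgt_not_eq, exp_pos).
  apply (Rmult_le_reg_l (t ^ n / INR (fact n))); [apply Rdiv_lt_0_compat; lra|].
  replace (t ^ n / INR (fact n) * (INR (fact n) / t ^ n * exp t)) with (exp t) by (field; lra).
  rewrite Rmult_1_r; destruct n as [|n]; [simpl in H |- *; lra|].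
  rewrite tech5 in H; simpl pred in Hsum; lra.
Qed.

Lemma power_exp_lim_0 (s : R) : 0 < s ->
  filterlim (fun t => Rpower t s * exp (- t)) (at_right 0) (locally 0).
Proof.
  intros Hs; apply filterlim_locally; intros eps.
  assert (Hd : 0 < Rpower eps (/ s)) by (unfold Rpower; apply exp_pos).
  apply (at_right_0_intro _ (mkposreal _ Hd)); intros t [Ht0 Ht]; simpl in Ht.
  change (Rabs (Rpower t s * exp (- t) - 0) < eps); rewrite Rminus_0_r.
  assert (Hpow : Rpower t s < eps).
  { replace (pos eps) with (Rpower (Rpower eps (/ s)) s)
      by (rewrite Rpower_mult, Rinv_l, Rpower_1 by (apply cond_pos || lra); reflexivity).
    apply Rlt_Rpower_l; auto. }
  assert (0 < exp (- t) <= 1).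
  { split; [apply exp_pos|]; rewrite <- exp_0; left; apply exp_increasing; lra. }
  assert (0 < Rpower t s) by (unfold Rpower; apply exp_pos).
  rewrite Rabs_pos_eq by nra; nra.
Qed.

(* [t ^ s <= t ^ n] and [exp (- t) <= (n + 1)! / t ^ (n + 1)] for [n >= s]. *)
Lemma power_exp_lim_infty (s : R) : 0 < s ->
  filterlim (fun t => Rpower t s * exp (- t)) (Rbar_locally p_infty) (locally 0).
Proof.
  intros Hs; apply filterlim_locally; intros eps.
  set (n := Z.to_nat (up s)).
  assert (Hn : s <= INR n).
  { destruct (archimed s) as [H1 H2]; unfold n.
    rewrite INR_IZR_INZ, Z2Nat.id by (apply le_IZR; lra); lra. }
  set (F := INR (fact (S n))); assert (HF : 0 < F) by apply INR_fact_lt_0.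
  exists (Rmax 1 (F / eps)); intros t Ht.
  assert (Ht1 : 1 < t) by (eapply Rle_lt_trans; [apply Rmax_l|apply Ht]).
  assert (Ht2 : F / eps < t) by (eapply Rle_lt_trans; [apply Rmax_r|apply Ht]).
  change (Rabs (Rpower t s * exp (- t) - 0) < eps); rewrite Rminus_0_r.
  assert (Hpow : Rpower t s <= t ^ n)
    by (rewrite <- Rpower_pow by lra; apply Rle_Rpower; lra).
  assert (Hexp := exp_neg_le_fact_div_pow t (S n) ltac:(lra)); fold F in Hexp.
  assert (0 < t ^ n) by (apply pow_lt; lra).
  assert (0 < Rpower t s) by (unfold Rpower; apply exp_pos).
  assert (0 < exp (- t)) by apply exp_pos.
  rewrite Rabs_pos_eq by nra.
  apply Rle_lt_trans with (t ^ n * (F / t ^ S n)); [apply Rmult_le_compat; lra|].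
  replace (t ^ n * (F / t ^ S n)) with (F / t) by (simpl; field; lra).
  apply (Rmult_lt_reg_r t); [lra|]; unfold Rdiv; rewrite Rmult_assoc, Rinv_l by lra.
  apply (Rmult_lt_reg_r (/ eps)); [apply Rinv_0_lt_compat, cond_pos|].
  replace (eps * t * / eps) with t by (field; apply Rgt_not_eq, cond_pos); lra.
Qed.

(* Integration by parts: [t ^ s * exp (- t)] vanishes at both ends. *)
Lemma is_Gamma_succ (s l : R) : 0 < s ->
  is_improper_0_infty (gamma_integrand s) l ->
  is_improper_0_infty (gamma_integrand (s + 1)) (s * l).
Proof.
  intros Hs Hl.
  set (h := fun t => Rpower t s * (s / t) * exp (- t) - Rpower t s * exp (- t)).
  assert (Hparts : is_improper_0_infty h (0 - 0)).
  { apply (is_RInt_gen_antiderivative (fun t => Rpower t s * exp (- t))).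
    - intros t Ht; unfold h, Rpower; auto_derive; auto; field; lra.
    - intros t Ht; apply (@ex_derive_continuous R_AbsRing R_NormedModule).
      unfold h, Rpower; auto_derive; repeat split; lra.
    - apply power_exp_lim_0, Hs.
    - apply power_exp_lim_infty, Hs. }
  assert (H := is_RInt_gen_minus _ _ _ _ (is_RInt_gen_scal _ s _ Hl) Hparts).
  replace (s * l) with (minus (scal s l) (0 - 0))
    by (unfold minus, scal, plus, opp; simpl; unfold mult; simpl; ring).
  eapply is_RInt_gen_ext; [|exact H].
  apply filter_prod_pos; intros a b Ha Hb t Ht; simpl in Ht.
  assert (Ht0 : 0 < t) by (apply (between_pos a b t); auto; lra).
  unfold h, gamma_integrand, minus, scal, plus, opp; simpl; unfold mult; simpl.
  replace (s + 1 - 1) with s by ring; unfold Rminus at 1.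
  rewrite Rpower_plus, Rpower_Ropp, Rpower_1 by exact Ht0.
  field; lra.
Qed.

Lemma is_Gamma_1 : is_improper_0_infty (gamma_integrand 1) 1.
Proof.
  replace 1 with (0 - (- 1)) at 2 by ring.
  eapply is_RInt_gen_ext;
    [|apply (is_RInt_gen_antiderivative (fun t => - exp (- t)) (fun t => exp (- t)))].
  - apply filter_prod_pos; intros a b Ha Hb t Ht; unfold gamma_integrand.
    rewrite Rminus_diag; unfold Rpower; rewrite Rmult_0_l, exp_0, Rmult_1_l; reflexivity.
  - intros t Ht; auto_derive; auto; ring.
  - intros t Ht; apply (@ex_derive_continuous R_AbsRing R_NormedModule); auto_derive; auto.
  - replace (-1) with (- exp (- 0)) by (rewrite Ropp_0, exp_0; ring).
    apply (filterlim_filter_le_1 _ (filter_le_within (F := locally 0) _)).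
    apply (@ex_derive_continuous R_AbsRing R_NormedModule (fun t => - exp (- t)) 0).
    auto_derive; auto.
  - apply filterlim_locally; intros eps; exists (- ln eps); intros t Ht.
    change (Rabs (- exp (- t) - 0) < eps).
    rewrite Rminus_0_r, Rabs_Ropp, Rabs_pos_eq by (left; apply exp_pos).
    rewrite <- (exp_ln eps) by apply cond_pos; apply exp_increasing; lra.
Qed.

(* The improper integral of a nonnegative function is the supremum of its
   proper integrals over the segments [[a, b]] with [0 < a]. *)
Lemma is_RInt_gen_bounded_nonneg (f : R -> R) (B : R) :
  (forall t, 0 < t -> continuous f t) -> (forall t, 0 < t -> 0 <= f t) ->
  (forall a b, 0 < a -> a < b -> RInt f a b <= B) ->
  exists l, is_improper_0_infty f l /\ (forall a b, 0 < a -> a < b -> RInt f a b <= l).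
Proof.
  intros Hc Hpos HB.
  set (E := fun y => exists a b, 0 < a /\ a < b /\ y = RInt f a b).
  assert (HE : bound E) by (exists B; intros y (a & b & Ha & Hab & ->); apply HB; auto).
  assert (Hne : exists y, E y) by (exists (RInt f 1 2), 1, 2; repeat split; lra).
  destruct (completeness E HE Hne) as [l [Hub Hlub]].
  assert (Hle : forall a b, 0 < a -> a < b -> RInt f a b <= l)
    by (intros a b Ha Hab; apply Hub; exists a, b; auto).
  exists l; split; [|exact Hle].
  intros P [eps Heps].
  assert (Hclose : exists a0 b0, 0 < a0 /\ a0 < b0 /\ l - eps < RInt f a0 b0).
  { apply Classical_Prop.NNPP; intros Hn.
    assert (Hu : is_upper_bound E (l - eps)).
    { intros y (a & b & Ha & Hab & ->); apply Rnot_lt_le; intros Hlt.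
      apply Hn; exists a, b; auto. }
    specialize (Hlub _ Hu); destruct eps as [e He']; simpl in *; lra. }
  destruct Hclose as (a0 & b0 & Ha0 & Hab0 & Hl0).
  apply Filter_prod with (fun a => 0 < a < a0) (fun b => b0 < b).
  - apply (at_right_0_intro _ (mkposreal a0 Ha0)); auto.
  - exists b0; auto.
  - intros a b [Ha Ha'] Hb; exists (RInt f a b); split.
    + apply (RInt_correct (V := R_CompleteNormedModule)), ex_RInt_pos; auto; lra.
    + apply Heps; change (Rabs (RInt f a b - l) < eps).
      assert (E1 := RInt_Chasles f a a0 b
        (ex_RInt_pos f a a0 Ha Ha0 Hc) (ex_RInt_pos f a0 b Ha0 ltac:(lra) Hc)).
      assert (E2 := RInt_Chasles f a0 b0 b
        (ex_RInt_pos f a0 b0 Ha0 ltac:(lra) Hc) (ex_RInt_pos f b0 b ltac:(lra) ltac:(lra) Hc)).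
      assert (P1 : 0 <= RInt f a a0).
      { apply RInt_ge_0; [lra|apply ex_RInt_pos; auto|intros x Hx; apply Hpos; lra]. }
      assert (P2 : 0 <= RInt f b0 b).
      { apply RInt_ge_0; [lra|apply ex_RInt_pos; auto; lra|intros x Hx; apply Hpos; lra]. }
      assert (RInt f a b <= l) by (apply Hle; lra).
      unfold plus in E1, E2; simpl in E1, E2.
      rewrite Rabs_left1 by lra; lra.
Qed.

Lemma gamma_integrand_continuous s t : 0 < t -> continuous (gamma_integrand s) t.
Proof.
  intros Ht; apply (@ex_derive_continuous R_AbsRing R_NormedModule).
  unfold gamma_integrand, Rpower; auto_derive; auto.
Qed.

Lemma gamma_integrand_pos s t : 0 < gamma_integrand s t.
Proof. unfold gamma_integrand, Rpower; apply Rmult_lt_0_compat; apply exp_pos. Qed.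

Lemma gamma_integrand_half_le t :
  0 < t -> gamma_integrand (1 / 2) t <= / ((1 + t) * sqrt t).
Proof.
  intros Ht; unfold gamma_integrand.
  replace (1 / 2 - 1) with (- (/ 2)) by field.
  rewrite Rpower_Ropp, Rpower_sqrt by lra.
  assert (0 < sqrt t) by (apply sqrt_lt_R0; lra).
  assert (exp (- t) <= / (1 + t)).
  { rewrite exp_Ropp; apply Rinv_le_contravar; [lra|left; apply exp_ineq1; lra]. }
  rewrite Rinv_mult, (Rmult_comm (/ (1 + t))).
  apply Rmult_le_compat_l; [apply Rlt_le, Rinv_0_lt_compat|]; lra.
Qed.

(* [2 atan (sqrt t)] is a primitive of the bound [gamma_integrand_half_le]. *)
Lemma RInt_gamma_half_le a b : 0 < a -> a < b ->
  RInt (gamma_integrand (1 / 2)) a b <= 2 * PI.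
Proof.
  intros Ha Hab.
  set (g := fun t => / ((1 + t) * sqrt t)).
  assert (Hg : forall t, a <= t <= b -> is_derive (fun t => 2 * atan (sqrt t)) t (g t)).
  { intros t Ht; auto_derive; [lra|].
    unfold g; assert (0 < sqrt t) by (apply sqrt_lt_R0; lra).
    rewrite Rmult_1_r, sqrt_sqrt by lra; field; lra. }
  assert (Hgc : forall t, a <= t <= b -> continuous g t).
  { intros t Ht; apply (@ex_derive_continuous R_AbsRing R_NormedModule).
    unfold g; auto_derive; assert (0 < sqrt t) by (apply sqrt_lt_R0; lra).
    repeat split; try lra; apply Rgt_not_eq; nra. }
  apply Rle_trans with (RInt g a b).
  - apply RInt_le; [lra| | |intros t Ht; apply gamma_integrand_half_le; lra].
    + apply ex_RInt_pos; [lra|lra|intros; apply gamma_integrand_continuous; auto].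
    + apply (@ex_RInt_continuous R_CompleteNormedModule).
      rewrite Rmin_left, Rmax_right by lra; exact Hgc.
  - rewrite (is_RInt_unique g a b _ (is_RInt_derive _ g a b
      ltac:(rewrite Rmin_left, Rmax_right by lra; exact Hg)
      ltac:(rewrite Rmin_left, Rmax_right by lra; exact Hgc))).
    unfold minus, plus, opp; simpl.
    pose proof (atan_bound (sqrt a)); pose proof (atan_bound (sqrt b)); lra.
Qed.

Lemma is_Gamma_half : exists l, 0 < l /\ is_improper_0_infty (gamma_integrand (1 / 2)) l.
Proof.
  destruct (is_RInt_gen_bounded_nonneg (gamma_integrand (1 / 2)) (2 * PI)) as [l [Hl Hle]].
  - intros; apply gamma_integrand_continuous; auto.
  - intros; apply Rlt_le, gamma_integrand_pos.
  - apply RInt_gamma_half_le.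
  - exists l; split; auto.
    apply Rlt_le_trans with (RInt (gamma_integrand (1 / 2)) 1 2); [|apply Hle; lra].
    apply RInt_gt_0; [lra|intros; apply gamma_integrand_pos|].
    intros; apply gamma_integrand_continuous; lra.
Qed.

Lemma is_Gamma_nat n : is_improper_0_infty (gamma_integrand (INR (S n))) (INR (fact n)).
Proof.
  induction n as [|n IH]; [exact is_Gamma_1|].
  rewrite S_INR, fact_simpl, mult_INR.
  apply is_Gamma_succ; [apply lt_0_INR; lia|exact IH].
Qed.

Lemma is_Gamma_half_nat n (l : R) : is_improper_0_infty (gamma_integrand (1 / 2)) l ->
  is_improper_0_infty (gamma_integrand (INR n + 1 / 2))
    (INR (fact (2 * n)) / (4 ^ n * INR (fact n)) * l).
Proof.
  intros Hl; induction n as [|n IH].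
  - simpl; replace (0 + 1 / 2) with (1 / 2) by ring.
    replace (1 / (1 * 1) * l) with l by field; exact Hl.
  - replace (INR (S n) + 1 / 2) with ((INR n + 1 / 2) + 1) by (rewrite S_INR; ring).
    replace (INR (fact (2 * S n)) / (4 ^ S n * INR (fact (S n))) * l)
      with ((INR n + 1 / 2) * (INR (fact (2 * n)) / (4 ^ n * INR (fact n)) * l)).
    + apply is_Gamma_succ; [pose proof (pos_INR n); lra|exact IH].
    + replace (2 * S n)%nat with (S (S (2 * n))) by lia.
      rewrite !fact_simpl, !mult_INR, !S_INR, mult_INR; simpl (INR 2).
      pose proof (INR_fact_lt_0 n); pose proof (INR_fact_lt_0 (2 * n)); pose proof (pos_INR n).
      assert (0 < 4 ^ n) by (apply pow_lt; lra).
      simpl pow; field; lra.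
Qed.

Lemma Gamma_of_is_Gamma (s l : R) : is_improper_0_infty (gamma_integrand s) l -> Gamma s = l.
Proof. apply (is_RInt_gen_unique (V := R_CompleteNormedModule)). Qed.

Lemma Gamma_ratio j :
  Gamma (INR (S j) + 1 / 2) / (Gamma (INR (S j)) * Gamma (1 / 2)) = half_beta_norm j / 4 ^ S j.
Proof.
  destruct is_Gamma_half as [l [Hl HGl]].
  rewrite (Gamma_of_is_Gamma _ _ (is_Gamma_half_nat (S j) l HGl)),
    (Gamma_of_is_Gamma _ _ (is_Gamma_nat j)), (Gamma_of_is_Gamma _ _ HGl).
  unfold half_beta_norm, Binomial.C.
  replace (S j + j - j)%nat with (S j) by lia.
  replace (2 * S j)%nat with (S (S j + j)) by lia.
  rewrite (fact_simpl (S j + j)), !mult_INR.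
  replace (INR (S (S j + j))) with (2 * INR (S j)) by (rewrite !S_INR, plus_INR, S_INR; ring).
  pose proof (INR_fact_lt_0 j); pose proof (INR_fact_lt_0 (S j)); pose proof (INR_fact_lt_0 (S j + j)).
  assert (0 < 4 ^ S j) by (apply pow_lt; lra).
  field; lra.
Qed.

(** * The incomplete Beta function *)

Lemma initial_success_poly_eq_integral j (x : R) :
  initial_success_poly j x = half_beta_norm j * RInt (fun t => (t * (1 - t)) ^ j) 0 x.
Proof.
  rewrite <- (is_RInt_unique _ _ _ _ (initial_success_poly_integral j x)).
  apply (RInt_scal (V := R_CompleteNormedModule) (fun t => (t * (1 - t)) ^ j)).
  apply (@ex_RInt_continuous R_CompleteNormedModule); intros t _.
  apply (@ex_derive_continuous R_AbsRing R_NormedModule); auto_derive; auto.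
Qed.

(* The substitution [t = 4 y (1 - y)], with [sqrt (1 - t) = 1 - 2 y]. *)
Lemma beta_integral_substitution j x : 0 <= x < 1 / 2 ->
  RInt (fun t => Rpower t (INR (S j) - 1) * Rpower (1 - t) (1 / 2 - 1)) 0 (4 * (1 - x) * x) =
  4 ^ S j * RInt (fun t => (t * (1 - t)) ^ j) 0 x.
Proof.
  intros Hx.
  set (g := fun y => 4 * (1 - y) * y).
  set (f := fun t => t ^ j / sqrt (1 - t)).
  assert (Hg1 : forall y, 0 <= y <= x -> 0 < 1 - g y).
  { intros y Hy; unfold g; replace (1 - 4 * (1 - y) * y) with ((1 - 2 * y) ^ 2) by ring.
    apply pow_lt; lra. }
  assert (Hgx : 0 <= g x) by (unfold g; nra).
  transitivity (RInt f (g 0) (g x)).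
  { replace (g 0) with 0 by (unfold g; ring).
    apply RInt_ext; rewrite Rmin_left, Rmax_right by lra; intros t Ht.
    assert (0 < 1 - t) by (pose proof (Hg1 x ltac:(lra)); lra).
    unfold f; replace (INR (S j) - 1) with (INR j) by (rewrite S_INR; ring).
    replace (1 / 2 - 1) with (- (/ 2)) by field.
    rewrite Rpower_pow, Rpower_Ropp, Rpower_sqrt by lra; reflexivity. }
  rewrite <- (RInt_comp f g (fun y => 4 * (1 - 2 * y))).
  2: { rewrite Rmin_left, Rmax_right by lra; intros y Hy; pose proof (Hg1 y Hy).
       apply (@ex_derive_continuous R_AbsRing R_NormedModule); unfold f; auto_derive.
       repeat split; [lra|apply Rgt_not_eq, sqrt_lt_R0; lra]. }
  2: { intros y _; split; [unfold g; auto_derive; auto; ring|].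
       apply (@ex_derive_continuous R_AbsRing R_NormedModule); auto_derive; auto. }
  rewrite <- (RInt_scal (V := R_CompleteNormedModule)).
  - apply RInt_ext; rewrite Rmin_left, Rmax_right by lra; intros y Hy.
    unfold scal, f, g; simpl; unfold mult; simpl.
    replace (1 - 4 * (1 - y) * y) with ((1 - 2 * y) ^ 2) by ring.
    rewrite sqrt_pow2 by lra.
    replace (4 * (1 - y) * y) with (4 * (y * (1 - y))) by ring.
    rewrite Rpow_mult_distr; field; lra.
  - apply (@ex_RInt_continuous R_CompleteNormedModule); intros t _.
    apply (@ex_derive_continuous R_AbsRing R_NormedModule); auto_derive; auto.
Qed.

Lemma inc_beta_initial_success_poly j q : 0 < q < 1 / 2 ->
  inc_beta (4 * (1 - q) * q) (INR (S j)) (1 / 2) = initial_success_poly j q.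
Proof.
  intros Hq; unfold inc_beta.
  rewrite Gamma_ratio, beta_integral_substitution, initial_success_poly_eq_integral by lra.
  assert (0 < 4 ^ S j) by (apply pow_lt; lra).
  field; lra.
Qed.

Theorem theorem1 (q : R) (z A : nat) :
  0 < q -> q < 1 / 2 -> (1 <= z)%nat -> (z <= A)%nat ->
  let p := 1 - q in
  let lambda := q / p in
  is_lim_seq (fun k => attack_success_by p q z A k)
    ((inc_beta (4 * p * q) (INR z) (1 / 2) - lambda ^ (A + 1))
       / (1 - lambda ^ (A + 1))).
Proof.
  intros Hq0 Hq Hz HzA p lambda.
  destruct z as [|j]; [lia|]; unfold lambda, p.
  rewrite inc_beta_initial_success_poly, <- one_sub_loss_diag, <- attack_value_start by lra.
  exact (attack_success_limit q (S j) A ltac:(lra) Hq Hz HzA).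
Qed.
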